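(* Let $\mathcal{H}$ be a hypergraph on $V=\{v_1,\dots,v_n\}$. For $i\le n$ let $V_i=\{v_1,\dots,v_i\}$ and $\mathcal{H}_i=(V_i,\{F\cap V_i\mid F\in\mathcal{H}\})$. Let $k<i\le n$ and $E\in\mathrm{ext}_k(\mathcal{H}_i)$. Then $E\setminus\{v_i\}\in\mathrm{ext}_k(\mathcal{H}_{i-1})$.
   Context: For a hypergraph $\mathcal{H}$ on vertex set $W$, a $k$-trace on $W$ is a pair $(T,S)$ with $S\subseteq W$, $|S|=k$, $T\subseteq S$; $F$ realizes it if $F\cap S=T$. $\mathrm{traces}_k(F)$ is the set of $k$-traces on $W$ realized by $F$, and $\mathrm{traces}_k(\mathcal{H})=\bigcup_{F\in\mathcal{H}}\mathrm{traces}_k(F)$. $\mathrm{ext}_k(\mathcal{H})$ is the hypergraph on $W$ whose hyperedges are all $E\subseteq W$ with $\mathrm{traces}_k(E)\subseteq\mathrm{traces}_k(\mathcal{H})$. *)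

From mathcomp Require Import all_boot.
Set Implicit Arguments. Unset Strict Implicit. Unset Printing Implicit Defensive.

(* A hypergraph on a ground set W (a subset of the finite type T) is given by
   its ground set W and its set of hyperedges H : {set {set T}}. *)
Section Traces.
Variable T : finType.

Definition is_ktrace (k : nat) (W : {set T}) (p : {set T} * {set T}) : bool :=
  [&& p.2 \subset W, #|p.2| == k & p.1 \subset p.2].

Definition traces_k (k : nat) (W : {set T}) (F : {set T}) : {set {set T} * {set T}} :=
  [set p | is_ktrace k W p & F :&: p.2 == p.1].

Definition traces_kH (k : nat) (W : {set T}) (H : {set {set T}}) :
  {set {set T} * {set T}} :=
  \bigcup_(F in H) traces_k k W F.

Definition ext_k (k : nat) (W : {set T}) (H : {set {set T}}) : {set {set T}} :=
  [set E : {set T} | (E \subset W) && (traces_k k W E \subset traces_kH k W H)].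
End Traces.

(* V = {v_1,...,v_n} is modelled as 'I_n, with v_j (1-indexed) the ordinal j-1. *)
Definition Vset (n i : nat) : {set 'I_n} := [set v : 'I_n | v < i].

Definition restrH (n i : nat) (H : {set {set 'I_n}}) : {set {set 'I_n}} :=
  [set F :&: Vset n i | F in H].

From mathcomp Require Import all_boot.

(* The k-traces of F on W only depend on F :&: W, so ext_k of H_i on V_i is
   ext_k of H itself on V_i.  Since E :\ v_i = E :&: V_(i-1), it remains to see
   that ext_k of H shrinks along with the ground set: a k-trace of E :&: V_(i-1)
   on V_(i-1) is a k-trace of E on V_i, hence realized by a hyperedge of H. *)

Set Implicit Arguments.
Unset Strict Implicit.
Unset Printing Implicit Defensive.

Section Traces.
Variables (T : finType) (k : nat).
Implicit Types (W U : {set T}) (F E : {set T}) (H : {set {set T}}).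

Lemma traces_k_setI W U F :
  W \subset U -> traces_k k W (F :&: U) = traces_k k W F.
Proof.
move=> sWU; apply/setP => p; rewrite !inE.
case/boolP: (is_ktrace k W p) => //= /and3P[sW _ _].
by rewrite -setIA (setIidPr (subset_trans sW sWU)).
Qed.

Lemma traces_k_sub W' W F p :
  W' \subset W ->
  (p \in traces_k k W' F) = (p \in traces_k k W F) && (p.2 \subset W').
Proof.
move=> sW'W; rewrite !inE /is_ktrace.
case: (boolP (p.2 \subset W')) => [sW' | nsW']; last by rewrite !andbF.
by rewrite (subset_trans sW' sW'W) andbT.
Qed.

Lemma traces_kH_sub W' W H p :
  W' \subset W ->
  (p \in traces_kH k W' H) = (p \in traces_kH k W H) && (p.2 \subset W').
Proof.
move=> sW'W; apply/bigcupP/andP => [[F FH]|[/bigcupP[F FH pF] sW']].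
  by rewrite (traces_k_sub _ _ sW'W) => /andP[pF ->]; split=> //; apply/bigcupP; exists F.
by exists F; rewrite // (traces_k_sub _ _ sW'W) pF.
Qed.

Lemma traces_kH_restr W U H :
  W \subset U -> traces_kH k W [set F :&: U | F in H] = traces_kH k W H.
Proof.
move=> sWU; apply/setP => p; apply/bigcupP/bigcupP => [[_ /imsetP[F FH ->]]|[F FH]].
  by rewrite traces_k_setI // => pF; exists F.
by rewrite -(traces_k_setI _ sWU) => pF; exists (F :&: U) => //; apply: imset_f.
Qed.

Lemma ext_k_restr W U H :
  W \subset U -> ext_k k W [set F :&: U | F in H] = ext_k k W H.
Proof. by move=> sWU; rewrite /ext_k traces_kH_restr. Qed.

Lemma ext_k_setI W' W H E :
  W' \subset W -> E \in ext_k k W H -> E :&: W' \in ext_k k W' H.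
Proof.
move=> sW'W; rewrite !inE => /andP[_ sTr]; rewrite subsetIr /=.
rewrite traces_k_setI //; apply/subsetP => p.
rewrite (traces_k_sub _ _ sW'W) (traces_kH_sub _ _ sW'W) => /andP[pE ->].
by rewrite (subsetP sTr).
Qed.

End Traces.

Lemma Vset_pred (n i : nat) (v : 'I_n) :
  0 < i -> nat_of_ord v = i.-1 -> Vset n i.-1 = Vset n i :\ v.
Proof.
move=> i_gt0 hv; apply/setP => x; rewrite !inE -val_eqE /= hv.
by rewrite -[in x < i](prednK i_gt0) ltnS ltn_neqAle.
Qed.

Theorem lemma5 (n : nat) (H : {set {set 'I_n}}) (k i : nat)
  (hki : k < i) (hin : i <= n) (vi : 'I_n) (hvi : nat_of_ord vi = i.-1)
  (E : {set 'I_n}) (hE : E \in ext_k k (Vset n i) (restrH i H)) :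
  E :\ vi \in ext_k k (Vset n i.-1) (restrH i.-1 H).
Proof.
have i_gt0 : 0 < i by apply: leq_ltn_trans hki.
have sVi : Vset n i.-1 \subset Vset n i by rewrite (Vset_pred i_gt0 hvi) subD1set.
rewrite /restrH ext_k_restr // in hE; rewrite ext_k_restr //.
have sEV : E \subset Vset n i by move: hE; rewrite inE => /andP[].
have -> : E :\ vi = E :&: Vset n i.-1.
  by rewrite (Vset_pred i_gt0 hvi) !setDE setIA (setIidPl sEV).
exact: ext_k_setI sVi hE.
Qed.
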